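(* Let $R$ be a unique factorization domain of finite character and of Krull dimension $2$. Then every prime ideal of $R$ is radically perfect.
   Context: All rings are commutative with identity. A ring $R$ is of finite character if every nonzero element of $R$ is contained in only finitely many maximal ideals. An ideal $I$ of $R$ is called radically perfect if $\mathrm{ht}(I)=\inf\{n \mid \sqrt{I}=\sqrt{(\theta_1,\dots,\theta_n)} \text{ for some } \theta_1,\dots,\theta_n\in R\}$, and moreover, if $\mathrm{ht}(I)=0$, then $\sqrt{I}=\sqrt{(\theta)}$ for some zero divisor $\theta$ of $R$. *)

From mathcomp Require Import all_boot all_order all_algebra.
Set Implicit Arguments. Unset Strict Implicit. Unset Printing Implicit Defensive.
Import GRing.Theory.
Local Open Scope ring_scope.

Section IdealTheory.
Variable R : comUnitRingType.

Definition subI (I J : R -> Prop) : Prop := forall x, I x -> J x.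
Definition eqI (I J : R -> Prop) : Prop := forall x, I x <-> J x.
Definition ssubI (I J : R -> Prop) : Prop := subI I J /\ exists x, J x /\ ~ I x.

Definition is_ideal (I : R -> Prop) : Prop :=
  [/\ I 0, (forall x y, I x -> I y -> I (x + y)) & (forall r x, I x -> I (r * x))].

Definition is_prime_ideal (I : R -> Prop) : Prop :=
  [/\ is_ideal I, ~ I 1 & (forall a b, I (a * b) -> I a \/ I b)].

Definition is_maximal_ideal (I : R -> Prop) : Prop :=
  [/\ is_ideal I, ~ I 1 &
      (forall J, is_ideal J -> subI I J -> eqI J I \/ J 1)].

Definition radical (I : R -> Prop) : R -> Prop := fun x => exists n : nat, I (x ^+ n).

Definition gen_ideal (th : seq R) : R -> Prop :=
  fun x => exists c : 'I_(size th) -> R, x = \sum_(i < size th) c i * th`_i.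

Definition zero_divisor (t : R) : Prop := exists b : R, b != 0 /\ t * b = 0.

Definition prime_chain_to (n : nat) (P : R -> Prop) : Prop :=
  exists C : nat -> (R -> Prop),
    [/\ (forall i, (i <= n)%N -> is_prime_ideal (C i)),
        (forall i, (i < n)%N -> ssubI (C i) (C i.+1)) & eqI (C n) P].

Definition prime_height_eq (P : R -> Prop) (n : nat) : Prop :=
  prime_chain_to n P /\ ~ prime_chain_to n.+1 P.

Definition height_eq (I : R -> Prop) (n : nat) : Prop :=
  (exists P, [/\ is_prime_ideal P, subI I P & prime_height_eq P n]) /\
  (forall P, is_prime_ideal P -> subI I P -> forall m, prime_height_eq P m -> (n <= m)%N).

Definition krull_dim_eq (n : nat) : Prop :=
  (exists P, prime_chain_to n P) /\ ~ (exists P, prime_chain_to n.+1 P).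

Definition rad_gen_number_eq (I : R -> Prop) (n : nat) : Prop :=
  (exists th : seq R, size th = n /\ eqI (radical I) (radical (gen_ideal th))) /\
  (forall th : seq R, eqI (radical I) (radical (gen_ideal th)) -> (n <= size th)%N).

Definition radically_perfect (I : R -> Prop) : Prop :=
  exists n : nat, [/\ height_eq I n, rad_gen_number_eq I n &
    (n = 0%N -> exists t : R, zero_divisor t /\ eqI (radical I) (radical (gen_ideal [:: t])))].

Definition finite_character : Prop :=
  forall x : R, x != 0 -> exists (k : nat) (L : 'I_k -> (R -> Prop)),
    forall M, is_maximal_ideal M -> M x -> exists i : 'I_k, eqI M (L i).

End IdealTheory.

Section UFD.
Variable R : idomainType.

Definition irreducible_elt (a : R) : Prop :=
  [/\ a != 0, a \isn't a GRing.unit &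
      forall b c : R, a = b * c -> b \is a GRing.unit \/ c \is a GRing.unit].

Definition associated (a b : R) : Prop := exists2 u : R, u \is a GRing.unit & a = u * b.

Definition irr_factorization (a : R) (s : seq R) : Prop :=
  (forall i, (i < size s)%N -> irreducible_elt s`_i) /\ a = \prod_(x <- s) x.

Definition is_UFD : Prop :=
  forall a : R, a != 0 -> a \isn't a GRing.unit ->
    (exists s : seq R, irr_factorization a s) /\
    (forall s t : seq R, irr_factorization a s -> irr_factorization a t ->
       size s = size t /\
       exists f : 'I_(size s) -> 'I_(size t),
         injective f /\ forall i : 'I_(size s), associated s`_i t`_(f i)).

End UFD.

(* A nonzero prime [P] of a UFD contains a prime element [q].  If [P = (q)], a nonzero prime
   inside [(q)] contains [q], so [P] has height one and is generated by [q].  Otherwise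
   [0 < (q) < P] gives [ht P = 2 = dim R].  [P] is then not the radical of a principal ideal,
   since the minimal primes over a nonzero [(t)] are generated by prime factors of [t].  By
   finite character only finitely many maximal ideals contain [q]; prime avoidance gives [b]
   in [P] outside [(q)] and outside those of them that do not contain [P].  Every prime over
   [(q, b)] strictly contains [(q)], hence has height two, hence is one of these maximal
   ideals, hence contains [P]: so [P] is the radical of [(q, b)]. *)

From mathcomp Require Import all_boot all_order all_algebra.
From mathcomp Require Import boolp ring.
From mathcomp Require classical_sets.
Set Implicit Arguments. Unset Strict Implicit. Unset Printing Implicit Defensive.
Import GRing.Theory.
Local Open Scope ring_scope.

Section Ideals.
Variable R : comUnitRingType.
Implicit Types (I J M P Q : R -> Prop) (a b c d p t u w x y z : R) (th : seq R).

Lemma not_subI I J : ~ subI I J -> exists2 x, I x & ~ J x.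
Proof.
move=> nIJ; apply: contrapT => nx; apply: nIJ => x Ix.
by apply: contrapT => nJx; apply: nx; exists x.
Qed.

Lemma ssubI_subI_trans I J M : ssubI I J -> subI J M -> ssubI I M.
Proof.
case=> IJ [x [Jx nIx]] JM; split=> [y /IJ /JM //|].
by exists x; split=> //; apply: JM.
Qed.

Lemma ideal0 I : is_ideal I -> I 0.
Proof. by case. Qed.

Lemma idealD I x y : is_ideal I -> I x -> I y -> I (x + y).
Proof. by case=> _ hD _; apply: hD. Qed.

Lemma idealMl I a x : is_ideal I -> I x -> I (a * x).
Proof. by case=> _ _ hM; apply: hM. Qed.

Lemma idealMr I x a : is_ideal I -> I x -> I (x * a).
Proof. by rewrite mulrC; apply: idealMl. Qed.

Lemma idealB I x y : is_ideal I -> I x -> I y -> I (x - y).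
Proof. by move=> hI Ix Iy; apply: idealD => //; rewrite -mulN1r; apply: idealMl. Qed.

Lemma ideal_unit I u x : is_ideal I -> I u -> u \is a GRing.unit -> I x.
Proof. by move=> hI Iu uU; rewrite -(mulrVK uU x); apply: idealMl. Qed.

Lemma prime_ideal_ideal P : is_prime_ideal P -> is_ideal P.
Proof. by case. Qed.

Lemma prime_ideal_neq1 P : is_prime_ideal P -> ~ P 1.
Proof. by case. Qed.

Lemma prime_idealM P a b : is_prime_ideal P -> P (a * b) -> P a \/ P b.
Proof. by case=> _ _; apply. Qed.

Lemma prime_ideal_nonunit P u : is_prime_ideal P -> P u -> u \isn't a GRing.unit.
Proof.
move=> hP Pu; apply/negP => uU; apply: (prime_ideal_neq1 hP).
exact: ideal_unit (prime_ideal_ideal hP) Pu uU.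
Qed.

Lemma prime_idealX P x n : is_prime_ideal P -> P (x ^+ n) -> P x.
Proof.
move=> hP; elim: n => [|n IHn]; first by rewrite expr0 => /(prime_ideal_neq1 hP).
by rewrite exprS => /(prime_idealM hP) [|/IHn].
Qed.

Lemma prime_ideal_prod (T : eqType) P (s : seq T) (F : T -> R) :
  is_prime_ideal P -> P (\prod_(i <- s) F i) -> exists2 i, i \in s & P (F i).
Proof.
move=> hP; elim: s => [|i s IHs]; first by rewrite big_nil => /(prime_ideal_neq1 hP).
rewrite big_cons => /(prime_idealM hP) [PFi|/IHs [j js PFj]].
  by exists i => //; apply: mem_head.
by exists j; rewrite // in_cons js orbT.
Qed.

Lemma prime_ideal_eqI P Q : is_prime_ideal P -> eqI P Q -> is_prime_ideal Q.
Proof.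
move=> [[P0 PD PM] nP1 PP] E; split; first split.
- exact/E.
- by move=> x y /E Px /E Py; apply/E; apply: PD.
- by move=> a x /E Px; apply/E; apply: PM.
- by move/E.
- by move=> a b /E /PP [] ?; [left | right]; apply/E.
Qed.

Lemma sub_radical I x : I x -> radical I x.
Proof. by exists 1%N; rewrite expr1. Qed.

Lemma radical_prime P x : is_prime_ideal P -> radical P x <-> P x.
Proof. by move=> hP; split=> [[n /(prime_idealX hP)] //|/sub_radical]. Qed.

Lemma radical_prime_eqI P J : is_prime_ideal P -> subI J P -> subI P (radical J) ->
  eqI (radical P) (radical J).
Proof.
move=> hP JP PJ x; rewrite radical_prime //.
by split=> [/PJ //|[n /JP /(prime_idealX hP)]].
Qed.

Lemma gen_ideal_ideal th : is_ideal (gen_ideal th).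
Proof.
split.
- by exists (fun=> 0); rewrite big1 // => i _; rewrite mul0r.
- move=> _ _ [c ->] [d ->]; exists (fun i => c i + d i).
  by rewrite -big_split; apply: eq_bigr => i _; rewrite mulrDl.
- move=> a _ [c ->]; exists (fun i => a * c i).
  by rewrite mulr_sumr; apply: eq_bigr => i _; rewrite mulrA.
Qed.

Lemma gen_ideal_nth th i : (i < size th)%N -> gen_ideal th th`_i.
Proof.
move=> ith; exists (fun j => (val j == i)%:R).
rewrite (bigD1 (Ordinal ith)) //= eqxx mul1r big1 ?addr0 // => j.
by rewrite -val_eqE /= => /negbTE ->; rewrite mul0r.
Qed.

Lemma gen_ideal_sub I th : is_ideal I -> (forall i, (i < size th)%N -> I th`_i) ->
  subI (gen_ideal th) I.
Proof.
move=> hI thI _ [c ->]; apply: big_ind => [|x y|j _]; first exact: ideal0.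
  exact: idealD.
exact: idealMl (thI j (ltn_ord j)).
Qed.

Lemma gen_ideal_nil x : gen_ideal [::] x <-> x = 0.
Proof.
split=> [[c ->]|->]; first by rewrite big_ord0.
exact: ideal0 (gen_ideal_ideal _).
Qed.

Definition principal (p : R) : R -> Prop := fun x => exists d, x = d * p.

Lemma gen_ideal_seq1 t x : gen_ideal [:: t] x <-> principal t x.
Proof.
split=> [[c ->]|[d ->]]; first by rewrite big_ord1; exists (c ord0).
by exists (fun=> d); rewrite big_ord1.
Qed.

Lemma principal_ideal p : is_ideal (principal p).
Proof.
split.
- by exists 0; rewrite mul0r.
- by move=> _ _ [d ->] [e ->]; exists (d + e); rewrite mulrDl.
- by move=> a _ [d ->]; exists (a * d); rewrite mulrA.
Qed.

Lemma principal_id p : principal p p.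
Proof. by exists 1; rewrite mul1r. Qed.

Lemma principal_sub I p x : is_ideal I -> I p -> principal p x -> I x.
Proof. by move=> hI Ip [d ->]; apply: idealMl. Qed.

Definition prime_elt (p : R) : Prop :=
  [/\ p != 0, p \isn't a GRing.unit &
      forall a b, principal p (a * b) -> principal p a \/ principal p b].

Lemma principal_prime_ideal p : prime_elt p -> is_prime_ideal (principal p).
Proof.
case=> _ pN pP; split=> //; first exact: principal_ideal.
by case=> d /esym d1; move/negP: pN; apply; apply/unitrPr; exists d; rewrite mulrC.
Qed.

Definition ideal_adjoin I c : R -> Prop := fun y => exists2 x, I x & exists a, y = x + a * c.

Lemma ideal_adjoin_ideal I c : is_ideal I -> is_ideal (ideal_adjoin I c).
Proof.
move=> hI; split.
- by exists 0; [exact: ideal0 | exists 0; rewrite mul0r addr0].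
- move=> _ _ [x Ix [a ->]] [y Iy [b ->]]; exists (x + y); first exact: idealD.
  by exists (a + b); rewrite mulrDl addrACA.
- move=> d _ [x Ix [a ->]]; exists (d * x); first exact: idealMl.
  by exists (d * a); rewrite mulrDr mulrA.
Qed.

Lemma ideal_adjoin_sub I c : subI I (ideal_adjoin I c).
Proof. by move=> x Ix; exists x => //; exists 0; rewrite mul0r addr0. Qed.

Lemma ideal_adjoin_mem I c : is_ideal I -> ideal_adjoin I c c.
Proof. by move=> hI; exists 0; [exact: ideal0 | exists 1; rewrite mul1r add0r]. Qed.

Lemma ideal_adjoinM I c d z w : is_ideal I -> I (c * d) ->
  ideal_adjoin I c z -> ideal_adjoin I d w -> I (z * w).
Proof.
move=> hI Icd [x Ix [a ->]] [y Iy [b ->]].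
have -> : (x + a * c) * (y + b * d) = x * (y + b * d) + (a * b) * (c * d) + y * (a * c).
  by ring.
apply: (idealD hI); first apply: (idealD hI).
- exact: idealMr.
- exact: idealMl.
- exact: idealMr.
Qed.

Lemma maximal_ideal_prime M : is_maximal_ideal M -> is_prime_ideal M.
Proof.
case=> hM nM1 Mmax; split=> // a b Mab; apply: contrapT => /not_orP [nMa nMb].
have [E|] := Mmax _ (ideal_adjoin_ideal a hM) (@ideal_adjoin_sub M a).
  exact/nMa/E/ideal_adjoin_mem.
move=> M1; apply: nMb; rewrite -[b]mul1r.
exact: ideal_adjoinM hM Mab M1 (ideal_adjoin_mem b hM).
Qed.

End Ideals.

Section PrimeChains.
Variable R : comUnitRingType.
Implicit Types (M P Q : R -> Prop).

Lemma prime_chain_to_prime n P : prime_chain_to n P -> is_prime_ideal P.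
Proof. by case=> C [Cprime _ CP]; apply: prime_ideal_eqI (Cprime n (leqnn n)) CP. Qed.

Lemma prime_chain_to0 P : is_prime_ideal P -> prime_chain_to 0 P.
Proof. by move=> hP; exists (fun=> P); split. Qed.

Lemma prime_chain_toS n P Q :
  prime_chain_to n P -> ssubI P Q -> is_prime_ideal Q -> prime_chain_to n.+1 Q.
Proof.
case=> C [Cprime Cchain CP] PQ hQ; exists (fun i => if (i <= n)%N then C i else Q); split.
- by move=> i _; case: ifP => [/Cprime|].
- move=> i; rewrite ltnS => lein; rewrite lein; case: ifP => [ltin|/negbT]; first exact: Cchain.
  rewrite -ltnNge ltnS => leni; have -> : i = n by apply/eqP; rewrite eqn_leq lein.
  by case: PQ => PQ [x [Qx nPx]]; split=> [y /CP /PQ|]; last by exists x; split=> // /CP.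
- by rewrite ltnn.
Qed.

Lemma prime_chain_toSP n Q :
  prime_chain_to n.+1 Q -> exists2 P, prime_chain_to n P & ssubI P Q.
Proof.
case=> C [Cprime Cchain CQ]; exists (C n).
  by exists C; split=> // i lein; [apply: Cprime; apply: leqW | apply: Cchain; apply: leqW].
case: (Cchain n (ltnSn n)) => CC [x [Cx nCx]].
by split=> [y /CC /CQ|]; last by exists x; split=> //; apply/CQ.
Qed.

Lemma prime_chain_to_sub m n P Q : (m <= n)%N ->
  prime_chain_to n P -> subI P Q -> is_prime_ideal Q -> prime_chain_to m Q.
Proof.
elim: n P => [|n IHn] P; first by rewrite leqn0 => /eqP -> _ _; apply: prime_chain_to0.
rewrite leq_eqVlt ltnS => /orP [/eqP -> | lemn] /prime_chain_toSP [P' chP' P'P] PQ hQ.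
  exact: prime_chain_toS chP' (ssubI_subI_trans P'P PQ) hQ.
by apply: IHn lemn chP' _ hQ => x /(proj1 P'P) /PQ.
Qed.

Lemma prime_chain_toS_nonzero n P : prime_chain_to n.+1 P -> exists2 x, P x & x != 0.
Proof.
case/prime_chain_toSP => P' /prime_chain_to_prime hP' [_ [x [Px nP'x]]].
by exists x => //; apply: contra_notN nP'x => /eqP ->; apply: ideal0 (prime_ideal_ideal hP').
Qed.

Lemma prime_chain_to_top n P M : prime_chain_to n P -> ~ prime_chain_to n.+1 M ->
  is_prime_ideal M -> subI P M -> subI M P.
Proof.
move=> chP noM hM PM x Mx; apply: contrapT => nPx; apply: noM.
by apply: prime_chain_toS chP _ hM; split=> //; exists x.
Qed.

Lemma height_eq_prime n P : is_prime_ideal P -> prime_height_eq P n -> height_eq P n.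
Proof.
move=> hP [chP noP]; split; first by exists P; split.
move=> Q hQ PQ m [_ noQ]; rewrite leqNgt; apply/negP => ltmn; apply: noQ.
exact: prime_chain_to_sub ltmn chP PQ hQ.
Qed.

End PrimeChains.

Section MaximalIdeals.
Import classical_sets.
Local Open Scope classical_set_scope.
Variable R : comUnitRingType.
Implicit Types (A I J Q : R -> Prop) (x : R).

Definition avoiding_ideal J x A := [/\ is_ideal A, subI J A & forall n, ~ A (x ^+ n)].

Lemma avoiding_ideal_bigcup J x (F : set (R -> Prop)) A y :
  (forall X z, F X -> X z -> avoiding_ideal J x X) -> total_on F subset ->
  F A -> A y -> avoiding_ideal J x (\bigcup_(X in F) X).
Proof.
move=> FP Ftot FA Ay; have [hA JA _] := FP A y FA Ay; split; first split.
- by exists A => //; apply: ideal0 hA.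
- move=> u v [X FX Xu] [Y FY Yv].
  have [hX _ _] := FP X u FX Xu; have [hY _ _] := FP Y v FY Yv.
  have [XY|YX] := Ftot X Y FX FY; first by exists Y => //; apply: idealD hY (XY u Xu) Yv.
  by exists X => //; apply: idealD hX Xu (YX v Yv).
- by move=> a u [X FX Xu]; exists X => //; have [hX _ _] := FP X u FX Xu; apply: idealMl.
- by move=> u /JA Au; exists A.
- by move=> n [X FX Xxn]; have [_ _ nX] := FP X _ FX Xxn; apply: nX Xxn.
Qed.

Lemma exists_maximal_avoiding_ideal J x : avoiding_ideal J x J ->
  exists Q, avoiding_ideal J x Q /\
    forall Q', avoiding_ideal J x Q' -> subI Q Q' -> subI Q' Q.
Proof.
move=> avJ.
(* The union of the empty chain is empty, so the family must admit the empty set. *)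
have [|Q [avQ Qmax]] := Zorn_bigcup (P := fun A => forall y, A y -> avoiding_ideal J x A).
  by move=> F FP Ftot y [A FA Ay]; apply: avoiding_ideal_bigcup Ftot FA Ay => X z FX; apply: FP.
have [[y Qy]|Q0] := pselect (exists y, Q y); last first.
  exfalso; apply: (Qmax J) => [|y _]; last exact: avJ.
  split=> [y Qy|JQ]; first by exfalso; apply: Q0; exists y.
  by apply: Q0; exists 0; apply: JQ; case: avJ => hJ _ _; apply: ideal0 hJ.
exists Q; split=> [|Q' avQ' QQ' z Q'z]; first exact: avQ Qy.
apply: contrapT => nQz; apply: (Qmax Q'); first by split=> // /(_ z Q'z).
by move=> ? _.
Qed.

Lemma maximal_avoiding_ideal_prime J x Q : avoiding_ideal J x Q ->
  (forall Q', avoiding_ideal J x Q' -> subI Q Q' -> subI Q' Q) -> is_prime_ideal Q.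
Proof.
move=> [hQ JQ nQ] Qmax; split=> // [Q1|a b Qab]; first by apply: (nQ 0%N); rewrite expr0.
have adjoin_power c : ~ Q c -> exists n, ideal_adjoin Q c (x ^+ n).
  move=> nQc; apply: contrapT => nadj; apply/nQc/(Qmax (ideal_adjoin Q c)).
  - split; [exact: ideal_adjoin_ideal | move=> y /JQ; apply: ideal_adjoin_sub |].
    by move=> n adjn; apply: nadj; exists n.
  - exact: ideal_adjoin_sub.
  - exact: ideal_adjoin_mem.
apply: contrapT => /not_orP [/adjoin_power [n adja] /adjoin_power [m adjb]].
by apply: (nQ (n + m)%N); rewrite exprD; apply: ideal_adjoinM hQ Qab adja adjb.
Qed.

Lemma prime_ideal_avoiding J x : is_ideal J -> (forall n, ~ J (x ^+ n)) ->
  exists Q, [/\ is_prime_ideal Q, subI J Q & ~ Q x].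
Proof.
move=> hJ nJ; have [|Q [avQ Qmax]] := @exists_maximal_avoiding_ideal J x; first by split.
have [_ JQ nQ] := avQ; exists Q; split=> //; first exact: maximal_avoiding_ideal_prime Qmax.
by rewrite -[x]expr1; apply: nQ.
Qed.

Lemma ideal_sub_maximal J : is_ideal J -> ~ J 1 ->
  exists M, is_maximal_ideal M /\ subI J M.
Proof.
move=> hJ nJ1; have [|M [[hM JM nM] Mmax]] := @exists_maximal_avoiding_ideal J 1.
  by split=> // n; rewrite expr1n.
exists M; split=> //; split=> // [|I hI MI]; first by rewrite -(expr1n _ 0%N); apply: nM.
have [I1|nI1] := pselect (I 1); [by right | left => z; split=> [Iz|/MI //]].
by apply: (Mmax I _ MI _ Iz); split=> // [y /JM /MI //|n]; rewrite expr1n.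
Qed.

End MaximalIdeals.

Section PrimeAvoidance.
Variables (R : comUnitRingType) (T : finType) (I : R -> Prop) (Ps : T -> R -> Prop).
Hypothesis hI : is_ideal I.

(* The sum avoids [Ps i0] because the product does, and avoids [Ps i], [i != i0], because
   [f i0] does while the product does not. *)
Lemma prime_avoidance_combine (S : {set T}) (f : T -> R) i0 i1 :
  (forall i, i \in S -> is_prime_ideal (Ps i)) -> i0 \in S -> i1 \in S :\ i0 ->
  (forall i, i \in S -> [/\ I (f i), Ps i (f i) & forall j, j \in S :\ i -> ~ Ps j (f i)]) ->
  exists2 b, I b & forall i, i \in S -> ~ Ps i b.
Proof.
move=> hS Si0 S'i1 hf; exists (f i0 + \prod_(j in S :\ i0) f j) => [|i Si Pi].
  have [Ii0 _ _] := hf i0 Si0; have /setD1P [_ Si1] := S'i1; have [Ii1 _ _] := hf i1 Si1.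
  by apply: (idealD hI Ii0); rewrite (bigD1 i1 S'i1) /=; apply: idealMr hI Ii1.
have hPi := prime_ideal_ideal (hS i Si); have [_ Pfi _] := hf i Si.
have [ii0|ii0] := eqVneq i i0.
  rewrite {}ii0 in Si Pi hPi Pfi.
  have : Ps i0 (\prod_(j <- enum (S :\ i0)) f j).
    rewrite big_enum -(addKr (f i0) (\prod_(j in S :\ i0) f j)) addrC.
    exact: idealB hPi Pi Pfi.
  case/(prime_ideal_prod (hS i0 Si)) => j; rewrite mem_enum => /setD1P [ji0 Sj].
  by have [_ _ /(_ i0)] := hf j Sj; apply; rewrite !inE eq_sym ji0.
have S'i : i \in S :\ i0 by rewrite !inE ii0.
have [_ _ /(_ i S'i)] := hf i0 Si0; apply.
rewrite -[f i0](addrK (\prod_(j in S :\ i0) f j)); apply: (idealB hPi Pi).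
by rewrite (bigD1 i S'i) /=; apply: idealMr hPi Pfi.
Qed.

Lemma prime_avoidance (S : {set T}) :
  (forall i, i \in S -> is_prime_ideal (Ps i) /\ ~ subI I (Ps i)) ->
  exists2 b, I b & forall i, i \in S -> ~ Ps i b.
Proof.
move: {2}#|S|.+1 (ltnSn #|S|) => n; elim: n S => // n IHn S ltSn hS.
have [->|[i0 Si0]] := set_0Vmem S; first by exists 0 => [|i]; [apply: ideal0 | rewrite inE].
have [S1|[i1 S'i1]] := set_0Vmem (S :\ i0).
  have [_ /not_subI [y Iy nPy]] := hS i0 Si0; exists y => // i Si.
  have : i \notin S :\ i0 by rewrite S1 inE.
  by rewrite !inE Si andbT negbK => /eqP ->.
have avoid_others i : exists b, i \in S -> I b /\ forall j, j \in S :\ i -> ~ Ps j b.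
  have [Si|] := boolP (i \in S); last by exists 0.
  have ltSi : (#|S :\ i| < n)%N.
    by rewrite -ltnS (leq_trans _ ltSn) // ltnS proper_card // properD1.
  have [|b Ib hb] := IHn (S :\ i) ltSi; first by move=> j /setD1P [_ /hS].
  by exists b.
have [f hf] := choice avoid_others.
have [[i Si nPi]|allP] := pselect (exists2 i, i \in S & ~ Ps i (f i)).
  have [Ifi fi_avoid] := hf i Si; exists (f i) => // j Sj.
  by have [->|ji] := eqVneq j i; last by apply: fi_avoid; rewrite !inE ji.
apply: (prime_avoidance_combine (f := f) _ Si0 S'i1) => [i /hS [] //|i Si].
have [Ifi fi_avoid] := hf i Si; split=> //.
by apply: contrapT => nPi; apply: allP; exists i.
Qed.

End PrimeAvoidance.

Section Domain.
Variable R : idomainType.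
Implicit Types (P Q : R -> Prop) (a b c d p q t u x y z : R) (s : seq R).

Lemma zero_prime_ideal : is_prime_ideal (fun x : R => x = 0).
Proof.
split; first split.
- by [].
- by move=> x y -> ->; rewrite addr0.
- by move=> a x ->; rewrite mulr0.
- by move/eqP; rewrite oner_eq0.
- by move=> a b /eqP; rewrite mulf_eq0 => /orP [] /eqP; [left | right].
Qed.

Lemma prime_chain_to1 P q : is_prime_ideal P -> P q -> q != 0 -> prime_chain_to 1 P.
Proof.
move=> hP Pq q0; apply: (prime_chain_toS (prime_chain_to0 zero_prime_ideal) _ hP).
split=> [x ->|]; first exact: ideal0 (prime_ideal_ideal hP).
by exists q; split=> // /eqP; rewrite (negbTE q0).
Qed.

Lemma prime_chain_to2 P q y : prime_elt q -> is_prime_ideal P -> P q -> P y ->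
  ~ principal q y -> prime_chain_to 2 P.
Proof.
move=> qp hP Pq Py nqy; have [q0 _ _] := qp.
apply: (prime_chain_toS (prime_chain_to1 (principal_prime_ideal qp) (principal_id q) q0) _ hP).
split=> [x|]; first exact: principal_sub (prime_ideal_ideal hP) Pq.
by exists y.
Qed.

Lemma not_radical_gen_nil P z : P z -> z != 0 ->
  ~ eqI (radical P) (radical (gen_ideal [::])).
Proof.
move=> Pz z0 E; have [n /gen_ideal_nil /eqP] := proj1 (E z) (sub_radical Pz).
by rewrite expf_eq0 (negbTE z0) andbF.
Qed.

Lemma radically_perfect_zero P : is_prime_ideal P -> (forall x, P x -> x = 0) ->
  radically_perfect P.
Proof.
move=> hP P0; have hPi := prime_ideal_ideal hP.
exists 0%N; split.
- apply: (height_eq_prime hP); split; first exact: prime_chain_to0.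
  by case/prime_chain_toS_nonzero => x /P0 ->; rewrite eqxx.
- split=> //; exists [::]; split=> //; apply: (radical_prime_eqI hP) => x.
    by move/gen_ideal_nil ->; apply: ideal0 hPi.
  by move/P0 ->; apply/sub_radical/gen_ideal_nil.
- move=> _; exists 0; split; first by exists 1; rewrite oner_neq0 mul0r.
  apply: (radical_prime_eqI hP) => x.
    by move/gen_ideal_seq1 => [d ->]; rewrite mulr0; apply: ideal0 hPi.
  by move/P0 ->; apply: sub_radical; apply: ideal0 (gen_ideal_ideal _).
Qed.

Lemma irr_factorization_mem a s z : irr_factorization a s -> z \in s -> irreducible_elt z.
Proof. by case=> sirr _ zs; rewrite -(nth_index 0 zs); apply: sirr; rewrite index_mem. Qed.

Lemma irr_factorization_cat b c sb sc : irr_factorization b sb -> irr_factorization c sc ->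
  irr_factorization (b * c) (sb ++ sc).
Proof.
move=> [sbirr ->] [scirr ->]; split=> [i|]; last by rewrite big_cat.
rewrite size_cat nth_cat; case: ifP => [lti _|/negbT]; first exact: sbirr.
by rewrite -leqNgt => leib lti; apply: scirr; rewrite ltn_subLR.
Qed.

Lemma principal_prod s z : z \in s -> principal z (\prod_(y <- s) y).
Proof. by move=> zs; rewrite (big_rem z zs); exists (\prod_(y <- rem z s) y); rewrite mulrC. Qed.

Lemma irreducible_mull u a : u \is a GRing.unit -> irreducible_elt a ->
  irreducible_elt (u * a).
Proof.
move=> uU [a0 aN airr]; split; last 1 first.
- move=> b c uabc; have /airr [bU|] : a = (u^-1 * b) * c by rewrite -mulrA -uabc mulKr.
    by left; rewrite unitrMr ?unitrV in bU.
  by right.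
- by rewrite mulf_neq0 //; apply: contraTneq uU => ->; rewrite unitr0.
- by rewrite unitrMr.
Qed.

Section UFD.
Hypothesis ufd : is_UFD R.

(* Writing [a = d q], some factorization of [a] starts with a multiple of [q], namely
   [[:: d q]] or [q :: (factorization of d)] according as [d] is a unit or not; uniqueness
   transfers this to [s]. *)
Lemma irr_factorization_dvd a q s : irreducible_elt q -> principal q a -> a != 0 ->
  a \isn't a GRing.unit -> irr_factorization a s -> exists2 z, z \in s & principal q z.
Proof.
move=> qirr [d ad] a0 aN fs.
have d0 : d != 0 by apply: contraNneq a0 => d0; rewrite ad d0 mul0r.
have [t ft qt0] : exists2 t, irr_factorization a t & principal q t`_0.
  have [dU|dN] := boolP (d \is a GRing.unit).
    exists [:: d * q]; last by exists d.
    by split=> [[|//] _|]; [exact: irreducible_mull | rewrite big_seq1].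
  have [[sd [sdirr dE]] _] := ufd d0 dN.
  exists (q :: sd); last exact: principal_id.
  by split=> [[|i] //= /sdirr|]; last by rewrite big_cons mulrC ad dE.
have t0 : (0 < size t)%N.
  by case: t ft {qt0} => // - [_ a1]; move: aN; rewrite a1 big_nil unitr1.
have [_ [f [_ tf]]] := (ufd a0 aN).2 t s ft fs.
have [u uU /= tu] := tf (Ordinal t0).
exists s`_(f (Ordinal t0)); first exact: mem_nth.
by case: qt0 => e te; exists (u^-1 * e); rewrite -mulrA -te tu mulKr.
Qed.

Lemma irreducible_prime q : irreducible_elt q -> prime_elt q.
Proof.
move=> qirr; have [q0 qN _] := qirr; split=> // b c qbc.
have qI := principal_ideal q.
have [->|b0] := eqVneq b 0; first by left; exists 0; rewrite mul0r.
have [->|c0] := eqVneq c 0; first by right; exists 0; rewrite mul0r.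
have [bU|bN] := boolP (b \is a GRing.unit).
  by right; rewrite -(mulKr bU c); apply: idealMl qI qbc.
have [cU|cN] := boolP (c \is a GRing.unit).
  by left; rewrite -(mulrK cU b); apply: idealMr qI qbc.
have [[sb fb] _] := ufd b0 bN; have [[sc fc] _] := ufd c0 cN.
have bcN : b * c \isn't a GRing.unit by rewrite unitrM negb_and bN.
have fbc := irr_factorization_cat fb fc.
have [z] := irr_factorization_dvd qirr qbc (mulf_neq0 b0 c0) bcN fbc.
rewrite mem_cat => /orP [zb|zc] qz; [left | right]; apply: principal_sub qI qz _.
  by case: fb => _ ->; apply: principal_prod.
by case: fc => _ ->; apply: principal_prod.
Qed.

Lemma prime_ideal_irreducible P z : is_prime_ideal P -> P z -> z != 0 ->
  exists2 q, P q & irreducible_elt q.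
Proof.
move=> hP Pz z0; have [[s fs] _] := ufd z0 (prime_ideal_nonunit hP Pz).
have [q sq Pq] : exists2 q, q \in s & P q by apply: (prime_ideal_prod hP); case: fs => _ <-.
by exists q => //; apply: irr_factorization_mem fs sq.
Qed.

(* A nonzero prime ideal inside [(p)] contains an irreducible [r = d p], so [d] is a unit. *)
Lemma nonzero_prime_sub_principal P p z : p \isn't a GRing.unit ->
  is_prime_ideal P -> P z -> z != 0 -> subI P (principal p) -> P p.
Proof.
move=> pN hP Pz z0 Pp; have [r Pr [_ _ rirr]] := prime_ideal_irreducible hP Pz z0.
have [d rd] := Pp r Pr.
have dU : d \is a GRing.unit by case: (rirr _ _ rd) => // pU; move/negP: pN.
by rewrite -(mulKr dU p) -rd; apply: idealMl (prime_ideal_ideal hP) Pr.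
Qed.

Lemma radical_principal_prime P z t : is_prime_ideal P -> P z -> z != 0 ->
  eqI (radical P) (radical (gen_ideal [:: t])) -> exists2 p, prime_elt p & eqI P (principal p).
Proof.
move=> hP Pz z0 E.
have PE x : P x <-> exists n, principal t (x ^+ n).
  rewrite -radical_prime // E; split=> [[n /gen_ideal_seq1]|[n /gen_ideal_seq1]]; by exists n.
have Pt : P t by apply/PE; exists 1%N; rewrite expr1; apply: principal_id.
have t0 : t != 0.
  apply: contraNneq z0 => t0; have /PE [n [d]] := Pz.
  by rewrite t0 mulr0 => /eqP; rewrite expf_eq0 => /andP [_].
have [[s fs] _] := ufd t0 (prime_ideal_nonunit hP Pt).
have [p sp Pp] : exists2 p, p \in s & P p by apply: (prime_ideal_prod hP); case: fs => _ <-.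
have pp := irreducible_prime (irr_factorization_mem fs sp).
exists p => // x; split=> [/PE [n tx]|]; last exact: principal_sub (prime_ideal_ideal hP) Pp.
apply: (prime_idealX (n := n) (principal_prime_ideal pp)).
by apply: principal_sub (principal_ideal p) _ tx; case: fs => _ ->; apply: principal_prod.
Qed.

Lemma radically_perfect_principal P p : is_prime_ideal P -> prime_elt p ->
  eqI P (principal p) -> radically_perfect P.
Proof.
move=> hP pp EP; have [p0 pN _] := pp; have Pp : P p by apply/EP/principal_id.
exists 1%N; split=> //.
- apply: (height_eq_prime hP); split; first exact: prime_chain_to1 hP Pp p0.
  case/prime_chain_toSP => Q chQ [QP [x [Px nQx]]]; apply: nQx.
  have hQ := prime_chain_to_prime chQ; have [w Qw w0] := prime_chain_toS_nonzero chQ.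
  have Qp := nonzero_prime_sub_principal pN hQ Qw w0 (fun y Qy => proj1 (EP y) (QP y Qy)).
  exact: principal_sub (prime_ideal_ideal hQ) Qp (proj1 (EP x) Px).
- split=> [|[|t th] E //]; last by case: (not_radical_gen_nil Pp p0 E).
  exists [:: p]; split=> //; apply: (radical_prime_eqI hP) => x.
    by move/gen_ideal_seq1/EP.
  by move/EP/gen_ideal_seq1; apply: sub_radical.
Qed.

End UFD.
End Domain.

Section KrullDimensionTwo.
Variable R : idomainType.
Hypotheses (ufd : is_UFD R) (fc : finite_character R) (dim2 : krull_dim_eq R 2).
Implicit Types (P Q M : R -> Prop) (b q x y z : R).

Lemma no_prime_chain_to3 P : ~ prime_chain_to 3 P.
Proof. by move=> ch3; apply: dim2.2; exists P. Qed.

Lemma radical_two_generated P q y : prime_elt q -> is_prime_ideal P -> P q -> P y ->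
  ~ principal q y -> exists2 b, P b & eqI (radical P) (radical (gen_ideal [:: q; b])).
Proof.
move=> qp hP Pq Py nqy; have [q0 _ _] := qp; have hPi := prime_ideal_ideal hP.
have [k [L hL]] := fc q0.
pose Ps (i : option 'I_k) := if i is Some j then L j else principal q.
pose S := [set i | `[< is_prime_ideal (Ps i) /\ ~ subI P (Ps i) >]].
have [|b Pb hb] := prime_avoidance hPi (Ps := Ps) (S := S).
  by move=> i; rewrite inE => /asboolP.
have Sq : None \in S.
  by rewrite inE; apply/asboolP; split=> [|/(_ y Py) //]; apply: principal_prime_ideal.
exists b => //; apply: (radical_prime_eqI hP); first by apply: gen_ideal_sub => // -[|[|]].
move=> x Px; apply: contrapT => nx.
have [|Q [hQ qbQ nQx]] := prime_ideal_avoiding (gen_ideal_ideal [:: q; b]) (x := x).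
  by move=> n qbn; apply: nx; exists n.
have Qq : Q q by apply: qbQ (gen_ideal_nth (th := [:: q; b]) (i := 0) _).
have Qb : Q b by apply: qbQ (gen_ideal_nth (th := [:: q; b]) (i := 1) _).
have [M [maxM QM]] := ideal_sub_maximal (prime_ideal_ideal hQ) (prime_ideal_neq1 hQ).
have hM := maximal_ideal_prime maxM; have [j ML] := hL M maxM (QM q Qq).
have chQ : prime_chain_to 2 Q := prime_chain_to2 qp hQ Qq Qb (hb None Sq).
have MQ := prime_chain_to_top chQ (@no_prime_chain_to3 M) hM QM.
apply: (hb (Some j)); last exact/ML/QM.
rewrite inE; apply/asboolP; split; first exact: prime_ideal_eqI hM ML.
by move=> PL; apply/nQx/MQ/ML/PL.
Qed.

Lemma radically_perfect_nonprincipal P z : is_prime_ideal P -> P z -> z != 0 ->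
  (forall p, prime_elt p -> ~ eqI P (principal p)) -> radically_perfect P.
Proof.
move=> hP Pz z0 nonprincipal.
have [q Pq /(irreducible_prime ufd) qp] := prime_ideal_irreducible ufd hP Pz z0.
have [q0 _ _] := qp.
have [y Py nqy] : exists2 y, P y & ~ principal q y.
  apply: not_subI => Pq'; apply: (nonprincipal q qp) => x.
  by split=> [/Pq' //|]; apply: principal_sub (prime_ideal_ideal hP) Pq.
have [b Pb Erad] := radical_two_generated qp hP Pq Py nqy.
exists 2%N; split=> //.
- apply: (height_eq_prime hP); split; last exact: no_prime_chain_to3.
  exact: prime_chain_to2 qp hP Pq Py nqy.
- split=> [|[|t [|t' th]] E //]; first by exists [:: q; b].
    by case: (not_radical_gen_nil Pq q0 E).
  by have [p pp EP] := radical_principal_prime ufd hP Pq q0 E; case: (nonprincipal p pp EP).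
Qed.

End KrullDimensionTwo.

Theorem proposition4p1 (R : idomainType) :
  is_UFD R -> finite_character R -> krull_dim_eq R 2 ->
  forall P : R -> Prop, is_prime_ideal P -> radically_perfect P.
Proof.
move=> ufd fc dim2 P hP.
have [[z Pz z0]|P0] := pselect (exists2 z, P z & z != 0); last first.
  apply: radically_perfect_zero hP _ => x Px; apply: contrapT => /eqP x0.
  by apply: P0; exists x.
have [[p pp EP]|nonprincipal] := pselect (exists2 p, prime_elt p & eqI P (principal p)).
  exact: (radically_perfect_principal ufd hP pp EP).
apply: (radically_perfect_nonprincipal ufd fc dim2 hP Pz z0) => p pp EP.
by apply: nonprincipal; exists p.
Qed.
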